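(* Let $k \ge 2$ be an integer. If $G$ is a twin-free graph with $n$ vertices and $i_{\max}(G) = k$, then $n \le 2^{k-1}+k-1$. Furthermore, equality holds only if the graph $G$ is formed by taking a clique $K_{k-1}$ and adding, for every vertex subset $S$ of this clique, a vertex whose neighbourhood is precisely $S$.
   Context: $i_{\max}(G)$ denotes the number of maximal independent sets of $G$. A graph is twin-free if no two vertices have the same open neighbourhood. *)

From mathcomp Require Import all_boot.
Set Implicit Arguments. Unset Strict Implicit. Unset Printing Implicit Defensive.

Definition simple_graph (T : finType) (e : rel T) : Prop :=
  symmetric e /\ irreflexive e.

Definition nbhd (T : finType) (e : rel T) (x : T) : {set T} := [set y | e x y].

Definition twin_free (T : finType) (e : rel T) : Prop :=
  forall x y : T, nbhd e x = nbhd e y -> x = y.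

Definition independent (T : finType) (e : rel T) (A : {set T}) : bool :=
  [forall x in A, forall y in A, ~~ e x y].

Definition imax (T : finType) (e : rel T) : nat :=
  #|[set A : {set T} | maxset (independent e) A]|.

(* The extremal graph: a clique K_m on vertices inl i, plus for every subset
   S of the clique a vertex inr S whose neighbourhood is exactly S. *)
Definition ext_vertex (m : nat) : finType := ('I_m + {set 'I_m})%type.

Definition ext_rel (m : nat) : rel (ext_vertex m) :=
  fun u v =>
    match u, v with
    | inl i, inl j => i != j
    | inl i, inr X => i \in X
    | inr X, inl j => j \in X
    | inr _, inr _ => false
    end.

Definition graph_iso (T U : finType) (e : rel T) (e' : rel U) : Prop :=
  exists f : T -> U, bijective f /\ forall x y, e' (f x) (f y) = e x y.

From mathcomp Require Import all_boot zify.
Set Implicit Arguments. Unset Strict Implicit. Unset Printing Implicit Defensive.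

(* Send each vertex v to the set mis_of v of maximal independent sets containing
   it.  Twin-freeness makes this injective, adjacency becomes disjointness, and
   the image F is a Helly family (pairwise intersecting members have a common
   point) of nonempty subsets of the k-set W of maximal independent sets.
   Counting F together with its complements gives
   2|F| = |F u F^c| + |F n F^c| <= 2^k + |F n F^c|, and F n F^c is a
   complement-closed Helly family, so it has at most 2(k-1) members: choosing
   a in A and b outside A with as few separating members as possible, a median
   argument shows that only A and W \ A separate them, and identifying b with a
   loses exactly this pair.  In the equality case F u F^c is the whole power set
   and F n F^c consists of the singletons {y} and co-singletons W \ {y} for all
   y but one apex x; the Helly property then forces every set through x into F,
   which is the disjointness model of the extremal graph. *)

Section SetFamilies.
Variable X : finType.
Implicit Types (a b x y z : X) (A B C D W Y : {set X}) (F Q R S : {set {set X}}).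

Definition helly F :=
  forall S, S \subset F -> S != set0 -> {in S &, forall C D, C :&: D != set0} ->
  exists y, forall C, C \in S -> y \in C.

Definition family_on W F := forall A, A \in F -> A \subset W /\ A != set0.

Definition compl_closed W Q :=
  forall A, A \in Q -> [/\ A \subset W, A != set0 & W :\: A \in Q].

Lemma setDDK W C : C \subset W -> W :\: (W :\: C) = C.
Proof. by move=> CW; rewrite setDDr setDv set0U; apply/setIidPr. Qed.

Lemma helly_sub F Q : Q \subset F -> helly F -> helly Q.
Proof. by move=> QF hF S SQ; apply: hF; apply: subset_trans QF. Qed.

Lemma helly3 F C1 C2 C3 : helly F -> C1 \in F -> C2 \in F -> C3 \in F ->
  C1 :&: C2 != set0 -> C1 :&: C3 != set0 -> C2 :&: C3 != set0 ->
  exists y, [/\ y \in C1, y \in C2 & y \in C3].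
Proof.
move=> hF F1 F2 F3 n12 n13 n23.
have selfI C D : C :&: D != set0 -> C :&: C != set0 /\ D :&: D != set0.
  by rewrite !setIid => /set0Pn[y /setIP[yC yD]]; split; apply/set0Pn; exists y.
have [[n11 n22] [_ n33]] := (selfI _ _ n12, selfI _ _ n13).
have [y Sy] : exists y, forall C, C \in [set C1; C2; C3] -> y \in C.
  apply: hF; first by apply/subsetP => C; rewrite !inE => /orP[/orP[]|]/eqP->.
    by apply/set0Pn; exists C1; rewrite !inE eqxx.
  by move=> C D; rewrite !inE => /orP[/orP[]|]/eqP-> /orP[/orP[]|]/eqP->; rewrite // setIC.
by exists y; split; apply: Sy; rewrite !inE eqxx ?orbT.
Qed.

Definition majority (p q r : bool) := [|| p && q, q && r | r && p].

Lemma majorityN p q r : majority (~~ p) (~~ q) (~~ r) = ~~ majority p q r.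
Proof. by case: p; case: q; case: r. Qed.

Lemma majority_meet p q r p' q' r' : majority p q r -> majority p' q' r' ->
  [|| p && p', q && q' | r && r'].
Proof. by case: p; case: q; case: r; case: p'; case: q'; case: r'. Qed.

Definition separators Q a b := [set C in Q | (a \in C) != (b \in C)].

Lemma separators_median Q a b z w :
    (forall C, C \in Q -> (w \in C) = majority (a \in C) (b \in C) (z \in C)) ->
  separators Q a w \subset separators Q a b /\
  separators Q w b \subset separators Q a b.
Proof.
move=> wmaj; split; apply/subsetP => C /setIdP[CQ]; rewrite inE CQ wmaj //=;
  by case: (a \in C); case: (b \in C); case: (z \in C).
Qed.

Section ComplementClosed.
Variables (W : {set X}) (Q : {set {set X}}).
Hypotheses (cQ : compl_closed W Q) (hQ : helly Q).

Lemma median a b z : Q != set0 -> a \in W -> b \in W -> z \in W ->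
  exists2 w, w \in W &
    forall C, C \in Q -> (w \in C) = majority (a \in C) (b \in C) (z \in C).
Proof.
move=> /set0Pn[C0 C0Q] aW bW zW.
pose maj C := majority (a \in C) (b \in C) (z \in C).
have majC C : maj (W :\: C) = ~~ maj C by rewrite /maj !inE aW bW zW !andbT majorityN.
pose S := [set C in Q | maj C].
have SQ : S \subset Q by apply/subsetP => C /setIdP[].
have inS C : C \in Q -> C \in S \/ W :\: C \in S.
  move=> CQ; have [_ _ WCQ] := cQ CQ; rewrite !inE CQ WCQ majC.
  by case: (maj C); [left | right].
have [w Sw] : exists w, forall C, C \in S -> w \in C.
  apply: hQ SQ _ _; first by apply/set0Pn; case: (inS _ C0Q) => ?; eexists; eassumption.
  move=> C D /setIdP[_ mC] /setIdP[_ mD]; apply/set0Pn.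
  by case/or3P: (majority_meet mC mD) => /andP[? ?];
    [exists a | exists b | exists z]; apply/setIP.
have wW : w \in W.
  case: (inS _ C0Q) => /[dup] /Sw wC /setIdP[/cQ[/subsetP CW _ _] _]; exact: CW.
exists w => // C CQ; rewrite -/(maj C); have [_ _ WCQ] := cQ CQ.
case mC: (maj C); first by apply: Sw; rewrite inE CQ mC.
have : w \in W :\: C by apply: Sw; rewrite inE WCQ majC mC.
by case/setDP=> _ /negbTE.
Qed.

(* Take z telling C from A and the median w of a, b, z; then C no longer
   separates the pair (w, b) or (a, w) that still straddles A. *)
Lemma separators_shrink A C a b : A \in Q -> C \in Q -> C != A ->
    a \in A -> b \in W :\: A -> a \in C -> b \notin C ->
  exists a' b', [/\ a' \in A, b' \in W :\: A &
                   #|separators Q a' b'| < #|separators Q a b|].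
Proof.
move=> AQ CQ CA aA /setDP[bW bA] aC bC.
have [[AW _ _] [CW _ _]] := (cQ AQ, cQ CQ).
have aW := subsetP AW a aA.
have [z zW zC] : exists2 z, z \in W & (z \in C) = (z \notin A).
  move: CA; rewrite eqEsubset negb_and => /orP[] /subsetPn[z zin znotin].
  - by exists z; rewrite ?(subsetP CW) // zin (negbTE znotin).
  - by exists z; rewrite ?(subsetP AW) // zin (negbTE znotin).
have Q0 : Q != set0 by apply/set0Pn; exists A.
have [w wW wmaj] := median Q0 aW bW zW.
have [sub_aw sub_wb] := separators_median wmaj.
have Cab : C \in separators Q a b by rewrite inE CQ aC (negbTE bC).
have wmaj10 D : D \in Q -> a \in D -> b \notin D -> (w \in D) = (z \in D).
  by move=> DQ aD bD; rewrite wmaj // aD (negbTE bD) /majority /= andbT.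
have [wA wC] := (wmaj10 A AQ aA bA, wmaj10 C CQ aC bC).
case zA: (z \in A); rewrite zA in wA zC.
- exists w, b; split; rewrite ?inE ?wA ?bA ?bW //.
  apply: proper_card; apply/properP; split=> //; exists C => //.
  by rewrite inE CQ wC zC (negbTE bC).
- exists a, w; split; rewrite ?inE ?wA ?wW //.
  apply: proper_card; apply/properP; split=> //; exists C => //.
  by rewrite inE CQ wC zC aC.
Qed.

Lemma separators_min A a b : A \in Q -> a \in A -> b \in W :\: A ->
    (forall a' b', a' \in A -> b' \in W :\: A ->
       #|separators Q a b| <= #|separators Q a' b'|) ->
  separators Q a b \subset [set A; W :\: A].
Proof.
move=> AQ aA bWA ab_min; have /setDP[bW bA] := bWA.
have [AW _ _] := cQ AQ; have aW := subsetP AW a aA.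
have onlyA D : D \in Q -> a \in D -> b \notin D -> D = A.
  move=> DQ aD bD; apply/eqP; apply: contraT => DA.
  have [a' [b' [a'A b'WA]]] := separators_shrink AQ DQ DA aA bWA aD bD.
  by rewrite ltnNge ab_min.
apply/subsetP => C /setIdP[CQ]; have [CW _ WCQ] := cQ CQ; rewrite !inE.
case aC: (a \in C); case bC: (b \in C) => //= _.
  by rewrite (onlyA C) ?bC ?eqxx.
by rewrite -[C](setDDK CW) (onlyA (W :\: C)) ?eqxx ?orbT // !inE ?aC ?bC ?aW.
Qed.

End ComplementClosed.

Lemma compl_closed_setD_pair W Q A : compl_closed W Q -> A \in Q ->
  compl_closed W (Q :\: [set A; W :\: A]).
Proof.
move=> cQ AQ C /setDP[CQ]; have [CW C0 WCQ] := cQ _ CQ.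
rewrite !inE negb_or => /andP[CA CWA]; split=> //.
rewrite WCQ andbT negb_or; apply/andP; split.
- by apply: contra CWA => /eqP <-; rewrite setDDK.
- by apply: contra CA => /eqP WCWA; rewrite -(setDDK CW) WCWA setDDK //; case: (cQ _ AQ).
Qed.

Lemma card_setD_compl_pair W Q A : compl_closed W Q -> A \in Q ->
  #|Q| = #|Q :\: [set A; W :\: A]| + 2.
Proof.
move=> cQ AQ; have [AW A0 WAQ] := cQ _ AQ.
have AWA : A != W :\: A.
  have [y yA] := set0Pn _ A0; apply/eqP => eA.
  by have := yA; rewrite {1}eA inE yA.
rewrite -(cardsID [set A; W :\: A] Q) addnC (setIidPr _) ?cards2 ?AWA //.
by apply/subsetP => C; rewrite !inE => /orP[]/eqP->.
Qed.

Section Contraction.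
Variables (W : {set X}) (R : {set {set X}}) (a b : X).
Hypotheses (cR : compl_closed W R) (ab : a != b)
           (twin : forall C, C \in R -> (a \in C) = (b \in C)).

Definition contraction := [set C :\ b | C in R].

Lemma card_contraction : #|contraction| = #|R|.
Proof.
apply: card_in_imset => C D CR DR /= CDb; apply/setP => y.
have memb E : E \in R -> (y \in E) = if y == b then a \in E :\ b else y \in E :\ b.
  by move=> ER; rewrite !inE; case: eqVneq => [->|] //=; rewrite ab twin.
by rewrite (memb C) // (memb D) // CDb.
Qed.

Lemma contraction_compl_closed : compl_closed (W :\ b) contraction.
Proof.
move=> _ /imsetP[C CR ->]; have [CW C0 WCR] := cR CR; split.
- exact: setSD.
- have [c cC] := set0Pn _ C0; apply/set0Pn.
  case: (eqVneq c b) => [cb | ncb]; [exists a | exists c]; rewrite !inE ?ncb //.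
  by rewrite ab twin // -cb.
- have -> : (W :\ b) :\: (C :\ b) = (W :\: C) :\ b.
    by apply/setP => y; rewrite !inE; case: (y == b).
  exact: imset_f.
Qed.

Lemma contraction_helly : helly R -> helly contraction.
Proof.
move=> hR S' S'R S'0 S'meet.
pose S := [set C in R | C :\ b \in S'].
have SR : S \subset R by apply/subsetP => C /setIdP[].
have liftS C' : C' \in S' -> exists2 C, C \in S & C' = C :\ b.
  move=> C'S; have /imsetP[C CR eC] := subsetP S'R _ C'S.
  by exists C => //; rewrite inE CR -eC.
have [y Sy] : exists y, forall C, C \in S -> y \in C.
  apply: hR SR _ _.
    have [C' /liftS[C CS _]] := set0Pn _ S'0; by apply/set0Pn; exists C.
  move=> C D /setIdP[_ CS] /setIdP[_ DS].
  apply: contraNneq (S'meet _ _ CS DS) => CD0.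
  by rewrite -subset0 -CD0 setISS ?subD1set.
exists (if y == b then a else y) => _ /liftS[C CS ->].
have yC := Sy C CS; have CR := subsetP SR C CS.
by rewrite !inE; case: (eqVneq y b) yC => [-> bC | -> ->] //; rewrite ab twin.
Qed.

End Contraction.

Lemma compl_closed_helly_card W Q : compl_closed W Q -> helly Q -> #|Q| <= 2 * #|W|.-1.
Proof.
have [n] := ubnP #|Q|; elim: n W Q => // n IH W Q /ltnSE leQn cQ hQ.
case: (set_0Vmem Q) => [-> | [A AQ]]; first by rewrite cards0.
have [AW A0 WAQ] := cQ _ AQ; have [_ WA0 _] := cQ _ WAQ.
have [[a0 a0A] [b0 b0WA]] := (set0Pn _ A0, set0Pn _ WA0).
pose straddle p := (p.1 \in A) && (p.2 \in W :\: A).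
have straddle0 : straddle (a0, b0) by apply/andP.
have [[a b] /andP[/= aA bWA] ab_min] :=
  arg_minnP (fun p => #|separators Q p.1 p.2|) straddle0.
have sep_ab : separators Q a b \subset [set A; W :\: A].
  apply: separators_min => // a' b' a'A b'WA.
  by apply: (ab_min (a', b')); apply/andP.
have /setDP[bW bA] := bWA; have aW := subsetP AW a aA.
have ab : a != b by apply: contraNneq bA => <-.
have twin C : C \in Q :\: [set A; W :\: A] -> (a \in C) = (b \in C).
  case/setDP=> CQ; apply: contraNeq => ne; apply: (subsetP sep_ab).
  by rewrite inE CQ ne.
have := card_setD_compl_pair cQ AQ.
have := helly_sub (subsetDl Q [set A; W :\: A]) hQ.
have := compl_closed_setD_pair cQ AQ.
move: (Q :\: _) twin => R twin cR hR cardQ.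
have IHR : #|R| <= 2 * #|W :\ b|.-1.
  rewrite -(card_contraction ab twin); apply: IH.
  - by rewrite (card_contraction ab twin); apply: leq_trans leQn; rewrite cardQ addn2.
  - exact: contraction_compl_closed cR ab twin.
  - exact: contraction_helly ab twin hR.
have cardW : #|W| = #|W :\ b|.+1 by rewrite (cardsD1 b W) bW.
have Wb0 : 0 < #|W :\ b| by apply/card_gt0P; exists a; rewrite !inE ab.
by rewrite cardQ cardW /= -(prednK Wb0) mulnS addnC leq_add2l.
Qed.

Definition complements W F := [set W :\: A | A in F].

Lemma helly_symdiff F C Y y1 y2 y3 : helly F -> C \in F -> Y \in F ->
    y1 \in C :&: Y -> y2 \in C :\: Y -> y3 \in Y :\: C ->
  (C :\: Y) :|: (Y :\: C) \notin F.
Proof.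
move=> hF CF YF /setIP[y1C y1Y] /setDP[y2C y2Y] /setDP[y3Y y3C].
apply/negP => DF; have [y [yC yY]] : exists y,
    [/\ y \in C, y \in Y & y \in (C :\: Y) :|: (Y :\: C)].
  by apply: (helly3 hF CF YF DF); apply/set0Pn;
    [exists y1 | exists y2 | exists y3]; rewrite !inE ?y1C ?y1Y ?y2C ?y2Y ?y3C ?y3Y.
by rewrite !inE yC yY.
Qed.

Lemma helly_no_large_set F W x D : helly F -> x \in W ->
    (forall y, y \in W :\ x -> W :\ y \in F) -> D \subset W :\ x -> 1 < #|D| ->
  D \notin F.
Proof.
move=> hF xW cosF DWx /card_gt1P[d1 [d2 [d1D d2D d12]]]; apply/negP => DF.
have DW : D \subset W := subset_trans DWx (subD1set W x).
have xD : x \notin D by apply/negP => /(subsetP DWx); rewrite !inE eqxx.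
have meetD y : y \in D -> D :&: (W :\ y) != set0.
  move=> yD; apply/set0Pn; case: (eqVneq y d1) => [->|yd1].
    by exists d2; rewrite !inE eq_sym d12 d2D (subsetP DW).
  by exists d1; rewrite !inE eq_sym yd1 d1D (subsetP DW).
pose S := D |: [set W :\ y | y in D].
have [z Sz] : exists z, forall C, C \in S -> z \in C.
  apply: hF.
  - apply/subsetP => C /setU1P[-> // | /imsetP[y yD ->]].
    exact/cosF/(subsetP DWx).
  - by apply/set0Pn; exists D; rewrite setU11.
  move=> C C' /setU1P[-> | /imsetP[y yD ->]] /setU1P[-> | /imsetP[y' y'D ->]].
  - by rewrite setIid; apply/set0Pn; exists d1.
  - exact: meetD.
  - by rewrite setIC; exact: meetD.
  - apply/set0Pn; exists x; rewrite !inE xW !andbT.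
    by apply/andP; split; apply: contraNneq xD => ->.
have zD := Sz D (setU11 _ _).
by have := Sz (W :\ z) (setU1r _ (imset_f _ zD)); rewrite !inE eqxx.
Qed.

Section FamilyBound.
Variables (W : {set X}) (F : {set {set X}}).
Hypotheses (fF : family_on W F) (hF : helly F).

Lemma card_complements : #|complements W F| = #|F|.
Proof.
apply: card_in_imset => A B AF BF /= eAB.
by rewrite -(setDDK (fF AF).1) eAB setDDK //; case: (fF BF).
Qed.

Lemma complements_sub_powerset : F :|: complements W F \subset powerset W.
Proof.
apply/subsetP => A; rewrite !inE => /orP[/fF[] // | /imsetP[B _ ->]].
exact: subsetDl.
Qed.

Lemma compl_closed_selfcomplements : compl_closed W (F :&: complements W F).
Proof.
move=> A /setIP[AF /imsetP[B BF eA]]; have [AW A0] := fF AF.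
split=> //; rewrite inE /complements imset_f // andbT eA setDDK //.
exact: (fF BF).1.
Qed.

Lemma card_selfcomplements : #|F :&: complements W F| <= 2 * #|W|.-1.
Proof.
apply: compl_closed_helly_card compl_closed_selfcomplements _.
exact: helly_sub (subsetIl _ _) hF.
Qed.

Lemma family_card_bound : 2 * #|F| <= 2 ^ #|W| + 2 * #|W|.-1.
Proof.
rewrite mul2n -addnn -{2}card_complements -cardsUI.
apply: (leq_add _ card_selfcomplements).
by rewrite -card_powerset subset_leq_card // complements_sub_powerset.
Qed.

Section Extremal.
Hypothesis Feq : 2 * #|F| = 2 ^ #|W| + 2 * #|W|.-1.

Lemma extremal_cards :
  #|F :|: complements W F| = 2 ^ #|W| /\ #|F :&: complements W F| = 2 * #|W|.-1.
Proof.
have := cardsUI F (complements W F); rewrite card_complements addnn -mul2n Feq.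
have := subset_leq_card complements_sub_powerset; rewrite card_powerset.
have := card_selfcomplements; lia.
Qed.

Lemma extremal_cover B : B \subset W -> B \in F \/ W :\: B \in F.
Proof.
move=> BW; have : B \in F :|: complements W F.
  suff -> : F :|: complements W F = powerset W by rewrite inE.
  apply/eqP; rewrite eqEcard complements_sub_powerset card_powerset.
  by have [-> _] := extremal_cards; rewrite leqnn.
case/setUP=> [|/imsetP[A AF ->]]; [left | right] => //.
by rewrite setDDK //; case: (fF AF).
Qed.

Lemma extremal_no_split A Y a1 a2 b1 b2 : A \in F -> W :\: A \in F -> Y \in F ->
  a1 \in A :&: Y -> a2 \in A :\: Y -> b1 \in Y :\: A -> b2 \in (W :\: A) :\: Y ->
  False.
Proof.
move=> AF WAF YF a1AY a2AY b1YA b2WAY.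
have [[AW _] [YW _]] := (fF AF, fF YF).
have symdiffW : (A :\: Y) :|: (Y :\: A) \subset W.
  by rewrite subUset !(subset_trans (subsetDl _ _)).
case: (extremal_cover symdiffW); apply/negP.
  exact: helly_symdiff hF AF YF a1AY a2AY b1YA.
have -> : W :\: ((A :\: Y) :|: (Y :\: A)) = ((W :\: A) :\: Y) :|: (Y :\: (W :\: A)).
  apply/setP => y; rewrite !inE; move: (subsetP YW y).
  by case: (y \in W); case: (y \in A); case: (y \in Y) => // /(_ isT).
move: a1AY b1YA; rewrite !inE => /andP[a1A a1Y] /andP[b1A b1Y].
apply: (helly_symdiff hF WAF YF (y1 := b1) (y2 := b2) (y3 := a1)) => //.
- by rewrite !inE b1A b1Y (subsetP YW).
- by rewrite !inE a1A a1Y.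
Qed.

Lemma extremal_selfcompl_small A : A \in F -> W :\: A \in F ->
  #|A| <= 1 \/ #|W :\: A| <= 1.
Proof.
move=> AF WAF.
case: (ltnP 1 #|A|) => [/card_gt1P[a1 [a2 [a1A a2A a12]]] | _]; last by left.
case: (ltnP 1 #|W :\: A|) => [/card_gt1P[b1 [b2 [b1WA b2WA b12]]] | _]; last by right.
have [/setDP[b1W b1A] /setDP[b2W b2A]] := (b1WA, b2WA).
have AW := (fF AF).1; have [a1W a2W] := (subsetP AW a1 a1A, subsetP AW a2 a2A).
have n21 : (a2 == a1) = false by rewrite eq_sym; apply/negbTE.
have n2b1 : (a2 == b1) = false by apply/negbTE; apply: contraNneq b1A => <-.
have nb21 : (b2 == b1) = false by rewrite eq_sym; apply/negbTE.
have nb2a1 : (b2 == a1) = false by apply/negbTE; apply: contraNneq b2A => ->.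
have YW : [set a1; b1] \subset W by apply/subsetP => y /set2P[]->.
exfalso; case: (extremal_cover YW) => YF;
  [apply: (extremal_no_split AF WAF YF (a1 := a1) (a2 := a2) (b1 := b1) (b2 := b2))
  |apply: (extremal_no_split AF WAF YF (a1 := a2) (a2 := a1) (b1 := b2) (b2 := b1))];
  by rewrite !inE ?eqxx ?orbT ?n21 ?n2b1 ?nb21 ?nb2a1 ?a1A ?a2A ?(negbTE b1A)
    ?(negbTE b2A) ?a1W ?a2W ?b1W ?b2W.
Qed.

Lemma extremal_apex : exists2 x, x \in W &
  forall y, y \in W :\ x -> [set y] \in F /\ W :\ y \in F.
Proof.
pose I := [set y in W | ([set y] \in F) && (W :\ y \in F)].
have memI y : (y \in I) = [&& y \in W, [set y] \in F & W :\ y \in F] by rewrite inE.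
clearbody I; have IW : I \subset W by apply/subsetP => y; rewrite memI => /andP[].
have selfI : F :&: complements W F \subset
             [set [set y] | y in I] :|: [set W :\ y | y in I].
  apply/subsetP => A AQ; have [AW A0 WAQ] := compl_closed_selfcomplements AQ.
  have [_ WA0 _] := compl_closed_selfcomplements WAQ.
  have [/setIP[AF _] /setIP[WAF _]] := (AQ, WAQ).
  case: (extremal_selfcompl_small AF WAF) => small.
  - have /cards1P[y Ay] : #|A| == 1 by rewrite eqn_leq small card_gt0.
    have yW : y \in W by apply: (subsetP AW); rewrite Ay set11.
    by rewrite Ay; apply/setUP; left; apply: imset_f; rewrite memI yW -Ay AF WAF.
  - have /cards1P[y Ay] : #|W :\: A| == 1 by rewrite eqn_leq small card_gt0.
    have yW : y \in W by move: (set11 y); rewrite -Ay => /setDP[].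
    rewrite -(setDDK AW) Ay; apply/setUP; right; apply: imset_f.
    by rewrite memI yW -Ay setDDK // WAF AF.
have cardI : #|W|.-1 <= #|I|.
  rewrite -(@leq_pmul2l 2) //; have [_ <-] := extremal_cards.
  apply: leq_trans (subset_leq_card selfI) _; apply: leq_trans (leq_card_setU _ _) _.
  by rewrite mul2n -addnn leq_add ?leq_imset_card.
have W0 : 0 < #|W| by case: #|W| Feq => // /eqP; rewrite expn0 eqn_leq; lia.
have [x xW WxI] : exists2 x, x \in W & W :\ x \subset I.
  case: (set_0Vmem (W :\: I)) => [WI0 | [x /setDP[xW xI]]].
    have /card_gt0P[x xW] := W0; exists x => //.
    by apply: subset_trans (subD1set W x) _; rewrite -setD_eq0 WI0.
  exists x => //; apply/subsetP => y /setD1P[yx yW]; apply: contraNT yx => yI.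
  have : #|W :\: I| <= 1 by rewrite cardsD (setIidPr IW); lia.
  by move/card_le1_eqP/(_ y x); rewrite !inE yI yW xI xW => /(_ isT isT) ->.
by exists x => // y /(subsetP WxI); rewrite memI => /and3P[].
Qed.

Lemma extremal_family : exists2 x, x \in W &
  (forall y, y \in W :\ x -> [set y] \in F) /\
  (forall B, B \subset W -> x \in B -> B \in F).
Proof.
have [x xW apex] := extremal_apex.
exists x => //; split=> [y /apex[] // | B BW xB].
case: (extremal_cover BW) => // DF; have [_ D0] := fF DF.
have DWx : W :\: B \subset W :\ x by apply: setDS; rewrite sub1set.
have D1 : ~~ (1 < #|W :\: B|).
  by apply: contraL DF; apply: helly_no_large_set hF xW _ DWx => y /apex[].
have /cards1P[y Dy] : #|W :\: B| == 1 by rewrite eqn_leq leqNgt D1 card_gt0.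
have yWx : y \in W :\ x by apply: (subsetP DWx); rewrite Dy set11.
by rewrite -(setDDK BW) Dy; case: (apex y yWx).
Qed.

End Extremal.
End FamilyBound.

End SetFamilies.

Lemma independentP (T : finType) (e : rel T) (A : {set T}) :
  reflect {in A &, forall x y, ~~ e x y} (independent e A).
Proof.
apply: (iffP forall_inP) => [indA x y xA yA | indA x xA].
  exact: (forall_inP (indA x xA)).
by apply/forall_inP => y yA; apply: indA.
Qed.

Section MaximalIndependentSets.
Variables (T : finType) (e : rel T).

Definition mis := [set A : {set T} | maxset (independent e) A].

Definition mis_of v := [set B in mis | v \in B].

Lemma mem_mis_of v B : (B \in mis_of v) = (B \in mis) && (v \in B).
Proof. by rewrite inE. Qed.

Lemma mis_extend A : independent e A -> exists2 B, B \in mis & A \subset B.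
Proof. by move=> indA; have [B maxB AB] := maxset_exists indA; exists B; rewrite ?inE. Qed.

Lemma mis_independent B : B \in mis -> independent e B.
Proof. by rewrite inE => /maxsetP[]. Qed.

Lemma helly_mis_of : helly [set mis_of v | v in T].
Proof.
move=> S SF _ Smeet.
pose V := [set v | mis_of v \in S].
have indV : independent e V.
  apply/independentP => u v; rewrite !inE => uS vS.
  have /set0Pn[B /setIP[/setIdP[BM uB] /setIdP[_ vB]]] := Smeet _ _ uS vS.
  by have /independentP := mis_independent BM; apply.
have [B BM VB] := mis_extend indV.
exists B => C CS; have /imsetP[v _ eC] := subsetP SF C CS.
by rewrite eC mem_mis_of BM (subsetP VB) // inE -eC.
Qed.

Hypotheses (e_sym : symmetric e) (e_irr : irreflexive e).

Lemma adj_mis_of a b : e a b = (mis_of a :&: mis_of b == set0).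
Proof.
apply/idP/idP => [eab | /eqP ab0].
  apply/eqP/setP => B; rewrite in_set0; apply/negP => /setIP[/setIdP[BM aB] /setIdP[_ bB]].
  by have /independentP/(_ a b aB bB) := mis_independent BM; rewrite eab.
apply: contraT => nab; have /mis_extend[B BM abB] : independent e [set a; b].
  apply/independentP => u v /set2P[]-> /set2P[]->; by rewrite ?e_irr // e_sym.
have : B \in mis_of a :&: mis_of b.
  by rewrite inE !mem_mis_of BM !(subsetP abB) // !inE eqxx ?orbT.
by rewrite ab0 inE.
Qed.

Lemma mis_of_neq0 v : mis_of v != set0.
Proof.
have /mis_extend[B BM vB] : independent e [set v].
  by apply/independentP => x y /set1P-> /set1P->; rewrite e_irr.
by apply/set0Pn; exists B; rewrite mem_mis_of BM (subsetP vB) ?set11.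
Qed.

Lemma family_on_mis_of : family_on mis [set mis_of v | v in T].
Proof.
move=> _ /imsetP[v _ ->]; split; last exact: mis_of_neq0.
by apply/subsetP => B /setIdP[].
Qed.

Lemma mis_of_inj : twin_free e -> injective mis_of.
Proof. by move=> tf a b eab; apply: tf; apply/setP => y; rewrite !inE !adj_mis_of eab. Qed.

End MaximalIndependentSets.

Lemma card_set_of (T : finType) : #|{set T}| = 2 ^ #|T|.
Proof.
rewrite -[in RHS]cardsT -card_powerset.
by apply: eq_card => A; rewrite !inE subsetT.
Qed.

Lemma card_ext_vertex m : #|ext_vertex m| = m + 2 ^ m.
Proof. by rewrite card_sum card_ord card_set_of card_ord. Qed.

Section ExtremalGraph.
Variables (X : finType) (m : nat) (x : X) (h : 'I_m -> X).
Hypotheses (h_inj : injective h) (h_neq : forall j, h j != x).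

Definition ext_code (u : ext_vertex m) : {set X} :=
  match u with inl j => [set h j] | inr Z => x |: h @: ~: Z end.

Lemma ext_code_inj : injective ext_code.
Proof.
have xh (Z : {set 'I_m}) : x \notin h @: Z.
  by apply/imsetP => -[j _ xj]; move: (h_neq j); rewrite xj eqxx.
case=> [i|Z] [j|Z'] /= eq_code.
- by rewrite (h_inj (set1_inj eq_code)).
- by have := setU11 x (h @: ~: Z'); rewrite -eq_code inE eq_sym (negbTE (h_neq i)).
- by have := setU11 x (h @: ~: Z); rewrite eq_code inE eq_sym (negbTE (h_neq j)).
- congr inr; apply: setC_inj; apply: (imset_inj h_inj).
  by rewrite -(setU1K (xh (~: Z))) eq_code setU1K.
Qed.

Lemma ext_relE u v : ext_rel u v = (ext_code u :&: ext_code v == set0).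
Proof.
have disj i Z : ([set h i] :&: (x |: h @: ~: Z) == set0) = (i \in Z).
  by rewrite setI_eq0 disjoints1 !inE (negbTE (h_neq i)) mem_imset // inE negbK.
case: u v => [i|Z] [j|Z'] /=.
- by rewrite setI_eq0 disjoints1 inE (inj_eq h_inj).
- by rewrite disj.
- by rewrite setIC disj.
- by apply/esym/negbTE/set0Pn; exists x; rewrite inE !setU11.
Qed.

End ExtremalGraph.

Lemma graph_iso_of_codes (T U Y : finType) (r : rel Y) (e : rel T) (e' : rel U)
    (f : T -> Y) (g : U -> Y) :
  #|T| <= #|U| -> injective g -> (forall u, exists t, f t = g u) ->
  (forall a b, e a b = r (f a) (f b)) -> (forall u v, e' u v = r (g u) (g v)) ->
  graph_iso e e'.
Proof.
move=> TU g_inj fg ef e'g; have [h fh] := fin_all_exists fg.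
have h_inj : injective h by move=> u v /(congr1 f); rewrite !fh => /g_inj.
have [h' hK h'K] := inj_card_bij h_inj TU.
exists h'; split; first by exists h.
by move=> a b; rewrite e'g -!fh -ef !h'K.
Qed.

Lemma ord_enum_of_set (X : finType) (A : {set X}) m : #|A| = m ->
  exists2 h : 'I_m -> X, injective h & forall j, h j \in A.
Proof.
move=> cardA; exists (fun j => enum_val (cast_ord (esym cardA) j)) => [i j|j].
  by move/enum_val_inj/cast_ord_inj.
exact: enum_valP.
Qed.

Theorem corollary2p10 (k : nat) (T : finType) (e : rel T) :
  2 <= k -> simple_graph e -> twin_free e -> imax e = k ->
  #|T| <= 2 ^ (k - 1) + k - 1 /\
  (#|T| = 2 ^ (k - 1) + k - 1 -> graph_iso e (@ext_rel (k - 1))).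
Proof.
move=> k2 [e_sym e_irr] tf cardW; change (#|mis e| = k) in cardW.
set F := [set mis_of e v | v in T].
have cardT : #|T| = #|F| by rewrite card_imset //; exact: mis_of_inj.
have [fF hF] := (family_on_mis_of e_irr, @helly_mis_of T e).
have pow2k : 2 ^ k = 2 * 2 ^ (k - 1) by case: k k2 {cardW} => // k _; rewrite subn1 expnS.
have := family_card_bound fF hF; rewrite cardW -cardT => bound.
split=> [|Teq]; first lia.
have Feq : 2 * #|F| = 2 ^ #|mis e| + 2 * #|mis e|.-1 by rewrite cardW -cardT Teq; lia.
have [x xW [single star]] := extremal_family fF hF Feq.
have cardWx : #|mis e :\ x| = k - 1 by move: cardW; rewrite (cardsD1 x) xW; lia.
have [h h_inj hW] := ord_enum_of_set cardWx.
have h_neq j : h j != x by have := hW j; rewrite !inE => /andP[].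
apply: (graph_iso_of_codes (r := fun A B => A :&: B == set0) (f := mis_of e)
                            (g := ext_code x h)).
- by rewrite card_ext_vertex; lia.
- exact: ext_code_inj.
- move=> u; suff /imsetP[v _ ->] : ext_code x h u \in F by exists v.
  case: u => [j|Z] /=; first exact: single.
  apply: star; last exact: setU11.
  apply/subsetP => _ /setU1P[-> // | /imsetP[j _ ->]].
  exact: (subsetP (subD1set _ x)) (hW j).
- exact: adj_mis_of.
- exact: ext_relE.
Qed.
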